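(* Let $g\ge1$, $A=\begin{pmatrix}0&0\\1&0\end{pmatrix}$, $\mathcal M_A=\{X(\lambda)=\lambda^{g+1}A+\sum_{i=0}^g\lambda^iX_i\mid X_i\in\mathfrak{sl}(2)\}$ with the compatible Poisson tensors $P_0,P_1$ of the context, and $P_\lambda=P_1-\lambda P_0$. Let $H(\lambda)=\tfrac12\mathrm{Tr}\,X(\lambda)^2=\sum_{i=0}^{2g+1}H_i\lambda^i$. Then $H(\lambda)$ is a Casimir of the Poisson pencil, i.e. $P_\lambda\,dH(\lambda)=0$ identically in $\lambda$; in particular $P_0dH_{i-1}=P_1dH_i$ for all $i\ge1$. Moreover, for each $i$ with $1\le i\le 2g+1$, the bi-Hamiltonian vector field $Y_{g-i}:=P_0\,dH_{i-1}=P_1\,dH_i$ has the Lax representation $$\frac{dX(\lambda)}{dt}=\big[(\lambda^{-i}X(\lambda))_+,X(\lambda)\big],$$ where $(\cdot)_+$ denotes the projection onto nonnegative powers of $\lambda$.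
   Context: Tangent and cotangent spaces of $\mathcal M_A\cong\mathfrak{sl}(2)^{g+1}$ are identified with $\mathfrak{sl}(2)^{g+1}$ via the pairing $\langle(V_i),(W_i)\rangle=\sum_{i=0}^g\mathrm{Tr}(V_iW_i)$, and $dF=(\partial F/\partial X_0,\dots,\partial F/\partial X_g)$. Put $X_{g+1}:=A$ and $X_m:=0$ for $m>g+1$. $P_0:(W_0,\dots,W_g)\mapsto(\dot X_i)$ with $\dot X_i=\sum_{j=0}^{g-i}[X_{i+j+1},W_j]$; $P_1:(W_0,\dots,W_g)\mapsto(\dot X_i)$ with $\dot X_0=-[X_0,W_0]$ and $\dot X_i=\sum_{j=1}^{g+1-i}[X_{i+j},W_j]$ for $1\le i\le g$. Note $\tfrac12\mathrm{Tr}A^2=0$, so $H(\lambda)$ has degree at most $2g+1$ in $\lambda$. *)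

From HB Require Import structures.
From mathcomp Require Import all_boot all_order all_algebra.
From mathcomp Require Import all_classical all_reals.
From mathcomp Require Import topology normedtype derive.
Set Implicit Arguments. Unset Strict Implicit. Unset Printing Implicit Defensive.
Import Order.TTheory GRing.Theory Num.Theory.
Import numFieldNormedType.Exports.
Local Open Scope ring_scope.

Section Defs.
Variables (R : numFieldType) (g : nat).

(* points / tangent / cotangent vectors of M_A = sl(2)^(g+1): (X_0,...,X_g) *)
Definition tuple_sl := 'I_g.+1 -> 'M[R]_2.

Definition is_sl2 (M : 'M[R]_2) : Prop := \tr M = 0.

Definition Amat : 'M[R]_2 :=
  \matrix_(i < 2, j < 2) (if (i == 1 :> nat) && (j == 0 :> nat) then 1 else 0).

Definition lie (M N : 'M[R]_2) : 'M[R]_2 := M *m N - N *m M.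

Definition Xc (X : tuple_sl) (m : nat) : 'M[R]_2 :=
  if (m < g.+1)%N then X (inord m) else if m == g.+1 then Amat else 0.

Definition pairing (V W : tuple_sl) : R := \sum_(i < g.+1) \tr (V i *m W i).

Definition Xpoly (X : tuple_sl) : 'M[{poly R}]_2 :=
  'X^(g.+1) *: map_mx polyC Amat + \sum_(i < g.+1) 'X^i *: map_mx polyC (X i).

Definition Hpoly (X : tuple_sl) : {poly R} :=
  (2%:R^-1 : R) *: \tr (Xpoly X *m Xpoly X).
Definition Hcoef (i : nat) (X : tuple_sl) : R := (Hpoly X)`_i.

Definition is_grad (F : tuple_sl -> R) (X W : tuple_sl) : Prop :=
  (forall j, is_sl2 (W j)) /\
  forall V : tuple_sl, (forall j, is_sl2 (V j)) ->
    is_derive (0 : R^o) (1 : R^o)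
      (fun t : R^o => F (fun j => X j + t *: V j)) (pairing V W).

Definition P0 (X W : tuple_sl) : tuple_sl := fun i =>
  \sum_(j < g.+1 | (i + j <= g)%N) lie (Xc X (i + j + 1)) (W j).

Definition P1 (X W : tuple_sl) : tuple_sl := fun i =>
  if (i == 0 :> nat) then - lie (X i) (W i)
  else \sum_(j < g.+1 | (1 <= j)%N && (i + j <= g.+1)%N) lie (Xc X (i + j)) (W j).

(* dX(lambda)/dt for a vector field with components Y_0..Y_g (A is constant) *)
Definition dXdt (Y : tuple_sl) : 'M[{poly R}]_2 :=
  \sum_(k < g.+1) 'X^k *: map_mx polyC (Y k).

(* (lambda^{-i} M(lambda))_+ : projection onto nonnegative powers *)
Definition plus_part (i : nat) (M : 'M[{poly R}]_2) : 'M[{poly R}]_2 :=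
  map_mx (drop_poly i) M.

Definition lieP (M N : 'M[{poly R}]_2) : 'M[{poly R}]_2 := M *m N - N *m M.

End Defs.

(* The coefficients x_m of X(lambda) (x_(g+1) = A, x_m = 0 beyond) make
   H_n = 1/2 sum_(a+b=n) Tr(x_a x_b), so dH_n = (x_n, x_(n-1), ..., x_(n-g)),
   with x of a negative index read as 0.  Substituted into P_0 and P_1, both
   P_0 dH_n and P_1 dH_(n+1) have k-th component sum_(j<=n) [x_(k+j+1), x_(n-j)];
   the only identity needed is that sum_(a+b=N) [x_a, x_b] = 0 by antisymmetry.
   The Casimir property then telescopes, since P_1 dH_0 = 0 and
   P_0 dH_(2g+1) = 0, and the same antisymmetry identity shows that this sum is
   also the lambda^k coefficient of [(lambda^(-n-1) X)_+, X]. *)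

From HB Require Import structures.
From mathcomp Require Import all_boot all_order all_algebra.
From mathcomp Require Import all_classical all_reals.
From mathcomp Require Import topology normedtype derive.
From mathcomp Require Import ring zify.
Import Order.TTheory GRing.Theory Num.Theory.
Import numFieldNormedType.Exports.
Local Open Scope ring_scope.

Set Implicit Arguments.
Unset Strict Implicit.
Unset Printing Implicit Defensive.

Section Sums.
Variable V : nmodType.

Lemma big_ord_vanishing m1 m2 (F : nat -> V) :
  (forall j, (minn m1 m2 <= j)%N -> F j = 0) ->
  \sum_(j < m1) F j = \sum_(j < m2) F j.
Proof.
move=> F0; suff trunc k : \sum_(j < k) F j = \sum_(j < minn k (minn m1 m2)) F j.
  by rewrite trunc [in RHS]trunc minnA minnn [minn m1 m2]minnC minnA minnn minnC.
rewrite -[in LHS](subnKC (geq_minl k (minn m1 m2))) big_split_ord /=.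
by rewrite [X in _ + X]big1 ?addr0 // => j _; apply: F0; have := ltn_ord j; lia.
Qed.

Lemma big_ord_rev_sub k (F : nat -> V) :
  \sum_(a < k.+1) F a = \sum_(a < k.+1) F (k - a)%N.
Proof. by rewrite (reindex_inj rev_ord_inj); apply: eq_bigr => a _ /=; rewrite subSS. Qed.

End Sums.

Notation coefmx k := (map_mx (coefp k)).

Section MatrixPolynomialCoefficients.
Variable R : nzRingType.

Lemma coefmx_inj m n (P Q : 'M[{poly R}]_(m, n)) :
  (forall k, coefmx k P = coefmx k Q) -> P = Q.
Proof.
move=> PQ; apply/matrixP => i j; apply/polyP => k.
by have /matrixP/(_ i j) := PQ k; rewrite !mxE.
Qed.

Lemma coefmxXnC m n k d (A : 'M[R]_(m, n)) :
  coefmx k ('X^d *: map_mx polyC A) = if k == d then A else 0.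
Proof.
apply/matrixP => i j; rewrite !mxE /= coefXnM coefC.
by case: ltngtP => [kd|dk|->]; rewrite ?subnn ?mxE // subn_eq0 leqNgt dk.
Qed.

Lemma coefmxM m n p k (P : 'M[{poly R}]_(m, n)) (Q : 'M[{poly R}]_(n, p)) :
  coefmx k (P *m Q) = \sum_(a < k.+1) coefmx a P *m coefmx (k - a) Q.
Proof.
apply/matrixP => i j; rewrite !mxE /= coef_sum summxE.
rewrite (eq_bigr _ (fun l _ => coefM _ _ _)) exchange_big /=.
by apply: eq_bigr => a _; rewrite !mxE; apply: eq_bigr => l _; rewrite !mxE.
Qed.

Lemma coef_mxtrace n k (P : 'M[{poly R}]_n) : (\tr P)`_k = \tr (coefmx k P).
Proof. by rewrite coef_sum; apply: eq_bigr => i _; rewrite mxE. Qed.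

Lemma coefmx_drop_poly m n d k (P : 'M[{poly R}]_(m, n)) :
  coefmx k (map_mx (drop_poly d) P) = coefmx (k + d) P.
Proof. by apply/matrixP => i j; rewrite !mxE /= coef_drop_poly. Qed.

Lemma coefmx_sumXnC m n N k (A : 'I_N.+1 -> 'M[R]_(m, n)) :
  coefmx k (\sum_(d < N.+1) 'X^d *: map_mx polyC (A d)) =
  if (k < N.+1)%N then A (inord k) else 0.
Proof.
rewrite raddf_sum (eq_bigr _ (fun d _ => coefmxXnC _ _ _)) /=.
case: ltnP => [kN|Nk]; last first.
  by rewrite big1 // => d _; case: eqP => // kd; move: Nk; rewrite kd leqNgt ltn_ord.
rewrite (bigD1 (inord k)) //= inordK // eqxx big1 ?addr0 // => d.
by rewrite -val_eqE /= inordK // eq_sym => /negbTE ->.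
Qed.

End MatrixPolynomialCoefficients.

Lemma mxtrace_delta_mul (R : nzRingType) n (i j : 'I_n) (D : 'M[R]_n) :
  \tr (delta_mx i j *m D) = D j i.
Proof.
rewrite /mxtrace (bigD1 i) //= big1 ?addr0 => [|r /negbTE ri]; rewrite mxE.
  rewrite (bigD1 j) //= big1 ?addr0 => [|l /negbTE lj]; rewrite mxE ?lj ?andbF ?mul0r //.
  by rewrite !eqxx mul1r.
by rewrite big1 // => l _; rewrite mxE ri mul0r.
Qed.

Lemma traceless_pairing_eq0 (R : numFieldType) n (D : 'M[R]_n) :
  \tr D = 0 -> (forall E : 'M[R]_n, \tr E = 0 -> \tr (E *m D) = 0) -> D = 0.
Proof.
move=> trD0 DE0; have tr_delta i j : \tr (delta_mx i j : 'M[R]_n) = (i == j)%:R.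
  by rewrite -[delta_mx i j]mulmx1 mxtrace_delta_mul mxE eq_sym.
have offdiag i j : i != j -> D i j = 0.
  by move=> /negbTE ij; rewrite -mxtrace_delta_mul DE0 // tr_delta eq_sym ij.
have diag i k : D i i = D k k.
  apply/eqP; rewrite -subr_eq0 -!mxtrace_delta_mul -raddfB -mulmxBl /=.
  by rewrite DE0 // raddfB /= !tr_delta !eqxx subrr.
apply/matrixP => i j; rewrite mxE; have [<-|/offdiag //] := eqVneq i j.
have n_gt0 : (0 < n)%N by apply: leq_ltn_trans (ltn_ord i).
have : D i i *+ n = 0.
  by rewrite -trD0 /mxtrace (eq_bigr _ (fun k _ => diag k i)) sumr_const card_ord.
by move/eqP; rewrite mulrn_eq0 gtn_eqF //= => /eqP.
Qed.

Lemma is_derive_quadratic (R : numFieldType) (a b c : R) :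
  is_derive (0 : R^o) (1 : R^o) (fun t : R^o => a + t * b + t ^+ 2 * c) b.
Proof.
apply: is_derive_eq.
by rewrite !(scaler0, scale0r, add0r, addr0); exact: mulr1.
Qed.

Section LieBracket.
Variable R : numFieldType.
Implicit Types (A B : 'M[R]_2) (x : nat -> 'M[R]_2).

Lemma lie_antisym A B : lie B A = - lie A B.
Proof. by rewrite /lie opprB. Qed.

Lemma lierr A : lie A A = 0.
Proof. by rewrite /lie subrr. Qed.

Lemma lier0 A : lie A 0 = 0.
Proof. by rewrite /lie mulmx0 mul0mx subrr. Qed.

Lemma lie0r A : lie 0 A = 0.
Proof. by rewrite /lie mulmx0 mul0mx subrr. Qed.

Lemma lie_sumr A n (c : nat -> R) (B : nat -> 'M[R]_2) :
  lie A (\sum_(i < n) c i *: B i) = \sum_(i < n) c i *: lie A (B i).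
Proof.
rewrite /lie mulmx_sumr mulmx_suml -sumrB; apply: eq_bigr => i _.
by rewrite scalerBr scalemxAr scalemxAl.
Qed.

Lemma lie_conv_eq0 x k : \sum_(a < k.+1) lie (x a) (x (k - a)%N) = 0.
Proof.
have S2 : (\sum_(a < k.+1) lie (x a) (x (k - a)%N)) *+ 2 = 0.
  rewrite mulr2n {2}(big_ord_rev_sub k (fun a => lie (x a) (x (k - a)%N))).
  rewrite -big_split big1 //= => a _.
  have ak : (a <= k)%N by rewrite -ltnS.
  by rewrite subKn // lie_antisym addNr.
by move/eqP: S2; rewrite -scaler_nat scaler_eq0 pnatr_eq0 => /eqP.
Qed.

(* Both sides complete the vanishing convolution of total degree [n + k + 1]. *)
Lemma lie_conv_shift x n k :
  \sum_(a < k.+1) lie (x (a + n.+1)%N) (x (k - a)%N) =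
  \sum_(j < n.+1) lie (x (k + j + 1)%N) (x (n - j)%N).
Proof.
have := lie_conv_eq0 x (n.+1 + k); rewrite -addnS big_split_ord /=.
move/eqP; rewrite addrC addr_eq0 => /eqP conv.
transitivity (\sum_(a < k.+1) lie (x (n.+1 + a)%N) (x (n.+1 + k - (n.+1 + a))%N)).
  by apply: eq_bigr => a _; rewrite addnC subnDl.
rewrite conv (big_ord_rev_sub n (fun i => lie (x i) (x (n.+1 + k - i)%N))) -sumrN.
apply: eq_bigr => j _; rewrite lie_antisym opprK.
by congr (lie (x _) (x _)); have := ltn_ord j; lia.
Qed.

End LieBracket.

Section BiHamiltonianHierarchy.
Variables (R : numFieldType) (g : nat) (X : tuple_sl R g).
Local Notation x := (Xc X).

Lemma Xc_ord (j : 'I_g.+1) : x j = X j.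
Proof. by rewrite /Xc ltn_ord inord_val. Qed.

Lemma Xc_out m : (g.+1 < m)%N -> x m = 0.
Proof. by move=> gm; rewrite /Xc ltnNge (ltnW gm) gtn_eqF. Qed.

(* The guard on [j <= n] is needed because [n - j] is truncated subtraction. *)
Definition dHc n (j : nat) : 'M[R]_2 := if (j <= n)%N then x (n - j) else 0.

Definition gradH n : tuple_sl R g := fun j => dHc n j.

Lemma dHcS n j : dHc n.+1 j.+1 = dHc n j.
Proof. by rewrite /dHc ltnS subSS. Qed.

(* Component [k] of the vector field Y_(g-n-1) of the paper. *)
Definition flowY n k : 'M[R]_2 := \sum_(j < n.+1) lie (x (k + j + 1)) (x (n - j)).

Lemma sum_lie_dHc n k m : (g < k + m)%N ->
  \sum_(j < m) lie (x (k + j + 1)) (dHc n j) = flowY n k.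
Proof.
move=> gkm; rewrite (big_ord_vanishing (m2 := n.+1)
  (F := fun j => lie (x (k + j + 1)) (dHc n j))) => [|j].
  by apply: eq_bigr => j _; rewrite /dHc -ltnS ltn_ord.
rewrite geq_min => /orP[mj|nj]; last by rewrite /dHc leqNgt nj lier0.
by rewrite Xc_out ?lie0r //; lia.
Qed.

Lemma P0_gradH n (k : 'I_g.+1) : P0 X (gradH n) k = flowY n k.
Proof.
rewrite /P0 big_mkcond /= -(sum_lie_dHc n (m := g.+1)) ?leq_addl //.
apply: eq_bigr => j _; case: leqP => // gkj.
by rewrite Xc_out ?lie0r //; lia.
Qed.

Lemma P1_gradHS n (k : 'I_g.+1) : P1 X (gradH n.+1) k = flowY n k.
Proof.
rewrite /P1; case: eqP => [k0 | /eqP k_neq0].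
  rewrite /gradH /dHc -Xc_ord k0 /= subn0 /flowY.
  by rewrite -(lie_conv_shift x n 0) big_ord1 /= add0n subn0 lie_antisym opprK.
rewrite big_mkcond big_ord_recl /= add0r -(sum_lie_dHc n (m := g)); last first.
  by move: k_neq0; rewrite -lt0n; lia.
apply: eq_bigr => j _; rewrite /bump leq0n /gradH add1n dHcS.
case: leqP => gkj; first by rewrite addnS addn1.
by rewrite Xc_out ?lie0r //; lia.
Qed.

Lemma P1_gradH0 (k : 'I_g.+1) : P1 X (gradH 0) k = 0.
Proof.
rewrite /P1; case: eqP => [k0|_].
  by rewrite /gradH /dHc -Xc_ord k0 /= lierr oppr0.
by rewrite big1 // => j /andP[j_gt0 _]; rewrite /gradH /dHc leqNgt j_gt0 lier0.
Qed.

Lemma flowY_out n k : (g < k)%N -> flowY n k = 0.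
Proof. by move=> gk; rewrite /flowY big1 // => j _; rewrite Xc_out ?lie0r //; lia. Qed.

Lemma flowY_top k : flowY (2 * g + 1) k = 0.
Proof.
rewrite /flowY big1 // => j _; have := ltn_ord j; rewrite ltnS => j_le.
have [gj | jg | gj] := ltngtP g j.
- by rewrite Xc_out ?lie0r //; lia.
- by rewrite (Xc_out (m := (2 * g + 1 - j)%N)) ?lier0 //; lia.
case: k => [|k]; last by rewrite Xc_out ?lie0r //; lia.
by rewrite -gj (_ : 2 * g + 1 - g = 0 + g + 1)%N ?lierr //; lia.
Qed.

Lemma lenard_recursion n (k : 'I_g.+1) : P0 X (gradH n) k = P1 X (gradH n.+1) k.
Proof. by rewrite P0_gradH P1_gradHS. Qed.

Lemma P0_sum n (c : nat -> R) (W : nat -> tuple_sl R g) (k : 'I_g.+1) :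
  P0 X (fun j => \sum_(i < n) c i *: W i j) k = \sum_(i < n) c i *: P0 X (W i) k.
Proof.
rewrite /P0 (eq_bigr _ (fun j _ => lie_sumr _ _ c (W^~ j))) exchange_big /=.
by apply: eq_bigr => i _; rewrite scaler_sumr.
Qed.

Lemma P1_sum n (c : nat -> R) (W : nat -> tuple_sl R g) (k : 'I_g.+1) :
  P1 X (fun j => \sum_(i < n) c i *: W i j) k = \sum_(i < n) c i *: P1 X (W i) k.
Proof.
rewrite /P1; case: eqP => _.
  by rewrite /= (lie_sumr _ _ c (W^~ k)) -sumrN; apply: eq_bigr => i _; rewrite scalerN.
rewrite (eq_bigr _ (fun j _ => lie_sumr _ _ c (W^~ j))) exchange_big /=.
by apply: eq_bigr => i _; rewrite scaler_sumr.
Qed.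

Lemma pencil_casimir (lam : R) (k : 'I_g.+1) :
  let dHl : tuple_sl R g := fun j => \sum_(i < (2 * g + 2)%N) lam ^+ i *: gradH i j in
  P1 X dHl k - lam *: P0 X dHl k = 0.
Proof.
rewrite /= P1_sum P0_sum (_ : 2 * g + 2 = (2 * g + 1).+1)%N; last by lia.
rewrite big_ord_recl big_ord_recr /= P1_gradH0 P0_gradH flowY_top !scaler0 add0r addr0.
rewrite scaler_sumr -sumrB big1 // => i _.
by rewrite /bump leq0n add1n P1_gradHS P0_gradH scalerA -exprS subrr.
Qed.

Lemma coefmx_dXdt (Y : tuple_sl R g) k :
  coefmx k (dXdt Y) = if (k < g.+1)%N then Y (inord k) else 0.
Proof. exact: coefmx_sumXnC. Qed.

Lemma coefmx_Xpoly k : coefmx k (Xpoly X) = x k.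
Proof.
rewrite raddfD /= coefmxXnC -/(dXdt X) coefmx_dXdt /Xc.
by case: ltnP => kg; rewrite ?(ltn_eqF kg) ?add0r ?addr0.
Qed.

Lemma coefmx_lax n k :
  coefmx k (lieP (plus_part n.+1 (Xpoly X)) (Xpoly X)) = flowY n k.
Proof.
rewrite /lieP /plus_part /flowY raddfB /= !coefmxM -(lie_conv_shift x n k).
rewrite [X in _ - X](big_ord_rev_sub k (fun a => coefmx a (Xpoly X) *m
  coefmx (k - a) (map_mx (drop_poly n.+1) (Xpoly X)))) -sumrB.
apply: eq_bigr => a _; have ak : (a <= k)%N by rewrite -ltnS.
by rewrite !coefmx_drop_poly !coefmx_Xpoly subKn.
Qed.

Lemma lax_gradH n :
  dXdt (P1 X (gradH n.+1)) = lieP (plus_part n.+1 (Xpoly X)) (Xpoly X).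
Proof.
apply: coefmx_inj => k; rewrite coefmx_dXdt coefmx_lax.
by case: ltnP => kg; [rewrite P1_gradHS inordK | rewrite flowY_out].
Qed.

End BiHamiltonianHierarchy.

Lemma pairingBr (R : numFieldType) g (V W1 W2 : tuple_sl R g) :
  pairing V (fun j => W1 j - W2 j) = pairing V W1 - pairing V W2.
Proof. by rewrite /pairing -sumrB; apply: eq_bigr => j _; rewrite mulmxBr raddfB. Qed.

Lemma is_grad_unique (R : numFieldType) g (F : tuple_sl R g -> R) (X W1 W2 : tuple_sl R g) :
  is_grad F X W1 -> is_grad F X W2 -> W1 = W2.
Proof.
move=> [sl1 dF1] [sl2 dF2]; apply/funext => j0; apply/eqP; rewrite -subr_eq0; apply/eqP.
apply: traceless_pairing_eq0 => [|E trE0]; first by rewrite raddfB /= sl1 sl2 subrr.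
pose V j : 'M[R]_2 := if j == j0 then E else 0.
have slV j : is_sl2 (V j) by rewrite /V; case: eqP => // _; exact: mxtrace0.
have : pairing V (fun j => W1 j - W2 j) = 0.
  rewrite pairingBr; have [_ <-] := dF1 V slV; have [_ <-] := dF2 V slV.
  exact: subrr.
rewrite /pairing (bigD1 j0) //= big1 ?addr0 => [|j /negbTE jj0]; first by rewrite /V eqxx.
by rewrite /V jj0 mul0mx mxtrace0.
Qed.

Section HamiltonianGradient.
Variables (R : numFieldType) (g : nat).
Implicit Types X V : tuple_sl R g.

Lemma Hcoef_conv X n :
  Hcoef n X = 2%:R^-1 * \sum_(a < n.+1) \tr (Xc X a *m Xc X (n - a)).
Proof.
rewrite /Hcoef /Hpoly coefZ coef_mxtrace coefmxM raddf_sum; congr (_ * _).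
by apply: eq_bigr => a _; rewrite !coefmx_Xpoly.
Qed.

Lemma Xc_shift X V (t : R) m :
  Xc (fun j => X j + t *: V j) m = Xc X m + t *: coefmx m (dXdt V).
Proof.
by rewrite coefmx_dXdt /Xc; case: ifP => // _; case: ifP => _; rewrite scaler0 addr0.
Qed.

Lemma pairing_gradH X V n :
  pairing V (gradH X n) = \sum_(a < n.+1) \tr (coefmx a (dXdt V) *m Xc X (n - a)).
Proof.
transitivity (\sum_(a < g.+1) \tr (coefmx a (dXdt V) *m dHc X n a)).
  by apply: eq_bigr => j _; rewrite coefmx_dXdt ltn_ord inord_val.
rewrite (big_ord_vanishing (m2 := n.+1)
  (F := fun a => \tr (coefmx a (dXdt V) *m dHc X n a))) => [|a].
  by apply: eq_bigr => a _; rewrite /dHc -ltnS ltn_ord.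
rewrite geq_min coefmx_dXdt /dHc => /orP[ga|na].
  by rewrite ltnNge ga mul0mx mxtrace0.
by rewrite (leqNgt a n) na mulmx0 mxtrace0.
Qed.

Lemma is_derive_Hcoef X V n :
  is_derive (0 : R^o) (1 : R^o) (fun t : R^o => Hcoef n (fun j => X j + t *: V j))
    (pairing V (gradH X n)).
Proof.
pose x := Xc X; pose v m := coefmx m (dXdt V).
have expand t : Hcoef n (fun j => X j + t *: V j) =
    Hcoef n X
    + t * (2%:R^-1 *
           \sum_(a < n.+1) (\tr (x a *m v (n - a)%N) + \tr (v a *m x (n - a)%N)))
    + t ^+ 2 * (2%:R^-1 * \sum_(a < n.+1) \tr (v a *m v (n - a)%N)).
  rewrite !Hcoef_conv mulrCA [t ^+ 2 * _]mulrCA -!mulrDr; congr (_ * _).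
  rewrite !mulr_sumr -!big_split; apply: eq_bigr => a _ /=.
  rewrite !Xc_shift !mulmxDl !mulmxDr -!scalemxAl -!scalemxAr !mxtraceD !mxtraceZ.
  by rewrite /x /v; ring.
have sym : \sum_(a < n.+1) \tr (x a *m v (n - a)%N) =
             \sum_(a < n.+1) \tr (v a *m x (n - a)%N).
  rewrite (big_ord_rev_sub n (fun a => \tr (x a *m v (n - a)%N))).
  apply: eq_bigr => a _; have an : (a <= n)%N by rewrite -ltnS.
  by rewrite subKn // mxtrace_mulC.
have -> : pairing V (gradH X n) =
    2%:R^-1 * \sum_(a < n.+1) (\tr (x a *m v (n - a)%N) + \tr (v a *m x (n - a)%N)).
  rewrite pairing_gradH big_split /= sym -mulr2n -[X in _ * X]mulr_natl mulrA.
  by rewrite mulVf ?pnatr_eq0 // mul1r.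
rewrite (funext expand); exact: is_derive_quadratic.
Qed.

Lemma Amat_traceless : \tr (Amat R) = 0.
Proof. by rewrite /mxtrace big1 // => i _; rewrite mxE; case: (nat_of_ord i) => [|[|]]. Qed.

Lemma Xc_traceless X : (forall j, is_sl2 (X j)) -> forall m, \tr (Xc X m) = 0.
Proof.
move=> slX m; rewrite /Xc; case: ifP => _; first exact: slX.
by case: ifP => _; [exact: Amat_traceless | exact: mxtrace0].
Qed.

Lemma is_grad_Hcoef X : (forall j, is_sl2 (X j)) ->
  forall n, is_grad (Hcoef n) X (gradH X n).
Proof.
move=> slX n; split=> [j|V _]; last exact: is_derive_Hcoef.
by rewrite /is_sl2 /gradH /dHc; case: ifP => _; [exact: Xc_traceless | exact: mxtrace0].
Qed.

End HamiltonianGradient.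

Theorem mainTheorem5 (R : numFieldType) (g : nat) (hg : (1 <= g)%N)
  (X : tuple_sl R g) (hX : forall j, is_sl2 (X j))
  (dH : nat -> tuple_sl R g)
  (hdH : forall i, is_grad (Hcoef i) X (dH i)) :
  (* the differentials dH_i exist *)
  (forall i : nat, exists W : tuple_sl R g, is_grad (Hcoef i) X W) /\
  (* Casimir of the pencil: P_lambda dH(lambda) = 0 for every lambda *)
  (forall (lam : R) (k : 'I_g.+1),
     let dHl : tuple_sl R g :=
       fun j => \sum_(i < (2 * g + 2)%N) lam ^+ i *: dH i j in
     P1 X dHl k - lam *: P0 X dHl k = 0) /\
  (* in particular P0 dH_{i-1} = P1 dH_i for all i >= 1 *)
  (forall i : nat, (1 <= i)%N -> forall k, P0 X (dH i.-1) k = P1 X (dH i) k) /\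
  (* Lax representation of Y_{g-i} = P1 dH_i, 1 <= i <= 2g+1 *)
  (forall i : nat, (1 <= i <= 2 * g + 1)%N ->
     dXdt (P1 X (dH i)) =
       lieP (plus_part i (Xpoly X)) (Xpoly X)).
Proof.
have -> : dH = gradH X.
  by apply/funext => i; apply: is_grad_unique (hdH i) (is_grad_Hcoef hX i).
split; first by move=> i; exists (gradH X i); exact: is_grad_Hcoef.
split; first exact: pencil_casimir.
split; first by move=> [|n] // _ k; exact: lenard_recursion.
by move=> [|n] // _; exact: lax_gradH.
Qed.
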